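(* Let $n\ge2$, let $A\subseteq\mathfrak{S}_n$ be Schur-positive and $\mathrm{cDes}$-invariant, and let $(m_\lambda)_{\lambda\vdash n}$ be nonnegative integers such that $\sum_{\pi\in A}\mathbf{x}^{\mathrm{Des}(\pi)}=\sum_{\lambda\vdash n}m_\lambda\sum_{T\in\mathrm{SYT}(\lambda)}\mathbf{x}^{\mathrm{Des}(T)}$. Then for every $0\le k<n$ the alternating sum $\sum_{i=k}^{n-1}(-1)^{k-i}m_{(n-i,1^i)}$ is nonnegative, and it equals $0$ when $k=0$.
   Context: For $\pi\in\mathfrak{S}_n$ (one-line notation), $\mathrm{Des}(\pi)=\{i\in[n-1]:\pi(i)>\pi(i+1)\}$ and $\mathrm{cDes}(\pi)=\{i\in[n]:\pi(i)>\pi(i+1)\}$ with $\pi(n+1):=\pi(1)$. $\mathbf{x}^J=\prod_{i\in J}x_i$; $i+J=\{i+j\bmod n:j\in J\}\subseteq[n]$. $A$ is Schur-positive if $\sum_{\pi\in A}\mathcal{F}_{n,\mathrm{Des}(\pi)}$ is symmetric and Schur-nonnegative, where $\mathcal{F}_{n,D}=\sum x_{i_1}\cdots x_{i_n}$ over $i_1\le\cdots\le i_n$ with $i_j<i_{j+1}$ for $j\in D$. $A$ is $\mathrm{cDes}$-invariant if there is a bijection $\psi:A\to A$ with $\mathrm{cDes}(\psi\pi)=1+\mathrm{cDes}(\pi)$. For $T\in\mathrm{SYT}(\lambda)$, $\mathrm{Des}(T)$ is the set of $i\in[n-1]$ with $i+1$ in a strictly lower row than $i$; $(n-i,1^i)$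 denotes a hook partition. *)

From HB Require Import structures.
From mathcomp Require Import all_boot all_order all_algebra all_fingroup.
From mathcomp Require Import mpoly.
Set Implicit Arguments. Unset Strict Implicit. Unset Printing Implicit Defensive.
Import GRing.Theory.
Local Open Scope ring_scope.

(* Conventions: positions / variable indices of [n] = {1..n} are represented
   0-based by 'I_n (i : 'I_n stands for i+1).  ordS i is the cyclic successor
   (i.+1 mod n). *)

Definition Des n (p : 'S_n) : {set 'I_n} :=
  [set i : 'I_n | (i.+1 < n)%N && (p (ordS i) < p i)%N].

Definition cDes n (p : 'S_n) : {set 'I_n} :=
  [set i : 'I_n | (p (ordS i) < p i)%N].

Definition shift1 n (J : {set 'I_n}) : {set 'I_n} := [set ordS j | j in J].

Definition cDes_invariant n (A : {set 'S_n}) : Prop :=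
  exists psi : {perm 'S_n},
    [set psi p | p in A] = A /\
    {in A, forall p, cDes (psi p) = shift1 (cDes p)}.

Definition xmon n (J : {set 'I_n}) : {mpoly int[n]} := \prod_(i in J) 'X_i.

Definition is_partition (n : nat) (l : seq nat) : bool :=
  [&& sorted geq l, all (fun x => 0 < x)%N l & sumn l == n].

(* every partition of n has at most n parts, each at most n, hence arises by
   deleting the zeros of some n-tuple with entries in {0..n} *)
Definition partitions (n : nat) : seq (seq nat) :=
  undup [seq l <- [seq [seq x <- map val (tval t) | (0 < x)%N] | t : n.-tuple 'I_n.+1]
        | is_partition n l].

Definition hook (n i : nat) : seq nat := (n - i)%N :: nseq i 1%N.

(* the Young diagram of l (English convention, rows numbered from the top) *)
Definition in_diag (l : seq nat) (c : nat * nat) : bool := (c.2 < nth 0 l c.1)%N.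

(* Standard Young tableaux of shape l (a partition of n), encoded by the cell
   (row, column) occupied by each entry; entry k : 'I_n stands for k+1. *)
Definition is_SYT n (l : seq nat) (T : {ffun 'I_n -> 'I_n * 'I_n}) : bool :=
  [&& injectiveb T,
      [forall k, in_diag l ((T k).1 : nat, (T k).2 : nat)],
      [forall k, forall k', (((T k).1 == (T k').1) && ((T k).2 < (T k').2)%N) ==> (k < k')%N] &
      [forall k, forall k', (((T k).2 == (T k').2) && ((T k).1 < (T k').1)%N) ==> (k < k')%N]].

Definition DesT n (T : {ffun 'I_n -> 'I_n * 'I_n}) : {set 'I_n} :=
  [set i : 'I_n | (i.+1 < n)%N && ((T i).1 < (T (ordS i)).1)%N].

Definition fundQ (N n : nat) (D : {set 'I_n}) : {mpoly int[N]} :=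
  \sum_(f : {ffun 'I_n -> 'I_N} |
          [forall j : 'I_n, (j.+1 < n)%N ==>
              ((f j <= f (ordS j))%N && ((j \in D) ==> (f j < f (ordS j))%N))])
     \prod_(j : 'I_n) 'X_(f j).

Definition cells (n : nat) (l : seq nat) :=
  {c : 'I_n * 'I_n | in_diag l (c.1 : nat, c.2 : nat)}.

Definition is_SSYT N n (l : seq nat) (S : {ffun cells n l -> 'I_N}) : bool :=
  [forall a : cells n l, forall b : cells n l,
     ((((val a).1 == (val b).1) && ((val a).2 < (val b).2)%N) ==> (S a <= S b)%N) &&
     ((((val a).2 == (val b).2) && ((val a).1 < (val b).1)%N) ==> (S a < S b)%N)].

Definition schur (N n : nat) (l : seq nat) : {mpoly int[N]} :=
  \sum_(S : {ffun cells n l -> 'I_N} | is_SSYT S) \prod_(c : cells n l) 'X_(S c).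

(* A is Schur-positive: sum_{pi in A} F_{n,Des pi} is symmetric and
   Schur-nonnegative; checked on every finite number N of variables
   (equivalent to the statement for infinitely many variables). *)
Definition schur_positive n (A : {set 'S_n}) : Prop :=
  forall N : nat,
    let Q : {mpoly int[N]} := \sum_(p in A) fundQ N (Des p) in
    Q \is symmetric /\
    exists c : seq nat -> nat,
      Q = \sum_(l <- partitions n) (c l)%:R * schur N n l.

From HB Require Import structures.
From mathcomp Require Import all_boot all_order all_algebra all_fingroup.
From mathcomp Require Import mpoly zify.

(* Write b_k for the number of pi in A with cDes(pi) = [k].  As Des(pi) = cDes(pi) \ {n}, the
   coefficient of x^[k] on the left-hand side counts the pi with cDes(pi) = [k] or {n} u [k];
   cDes-invariance carries {n} u [k] onto 1 + ({n} u [k]) = [k+1], so this coefficient is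
   b_k + b_(k+1).  On the right-hand side the only standard Young tableau with descent set [k]
   is the hook tableau of shape (n-k, 1^k) with 1, ..., k+1 down its first column, so the
   coefficient is m_(n-k,1^k).  The alternating sum therefore telescopes to b_k >= 0, and b_0 = 0
   because for n >= 2 a cyclic descent set is never empty (b_n = 0 as it is never full either). *)

Set Implicit Arguments. Unset Strict Implicit. Unset Printing Implicit Defensive.
Import GRing.Theory Num.Theory.

Lemma sum_ord_ltn m a : \sum_(j < m) (j < a : nat) = minn m a.
Proof.
elim: m => [|m IHm]; first by rewrite big_ord0 min0n.
by rewrite big_ord_recr /= IHm; case: ltnP => ?; lia.
Qed.

Lemma sum_ord_nth_leq m s : \sum_(i < m) nth 0 s i <= sumn s.
Proof.
elim: s m => [|x s IHs] m; first by rewrite big1 // => i; rewrite nth_nil.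
case: m => [|m]; first by rewrite big_ord0.
by rewrite big_ord_recl leq_add2l IHs.
Qed.

Lemma size_leq_sumn (s : seq nat) : all (fun x => 0 < x) s -> size s <= sumn s.
Proof. by elim: s => //= x s IHs /andP[x_gt0 /IHs]; lia. Qed.

Lemma sumn_leq_size (s : seq nat) :
  all (fun x => 0 < x) s -> sumn s <= size s -> s = nseq (size s) 1.
Proof.
elim: s => //= x s IHs /andP[x_gt0 s_gt0] le_sum.
have := size_leq_sumn s_gt0 => le_ss; have -> : x = 1 by lia.
by rewrite -IHs //; lia.
Qed.

Lemma partition_nth_leq n l r r' : is_partition n l -> r <= r' -> nth 0 l r' <= nth 0 l r.
Proof.
case/and3P=> l_sorted _ _ le_rr'.
have [lt_r'l | /(nth_default 0) -> //] := ltnP r' (size l).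
have geq_trans : transitive geq by move=> y x z /= le_yx le_zy; exact: leq_trans le_zy le_yx.
apply: (sorted_leq_nth geq_trans leqnn 0 l_sorted) => //; rewrite inE.
exact: leq_ltn_trans lt_r'l.
Qed.

Lemma partition_eq_hook n k l :
  is_partition n l -> k < size l -> n - k <= nth 0 l 0 -> l = hook n k.
Proof.
case/and3P=> _; case: l => //= x s /andP[_ s_gt0] /eqP sum_l lt_ks le_x.
have := size_leq_sumn s_gt0 => le_ss.
rewrite [s]sumn_leq_size //; last by lia.
by rewrite /hook; congr (_ :: nseq _ _); lia.
Qed.

Lemma nth_hook n k r : nth 0 (hook n k) r = if r == 0 then n - k else (r <= k : nat).
Proof. by case: r => //= r; rewrite nth_nseq; case: ltnP. Qed.

Lemma hook_partition n k : k < n -> is_partition n (hook n k).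
Proof.
move=> lt_kn; apply/and3P; split; last by rewrite /= sumn_nseq; apply/eqP; lia.
- case: k lt_kn => //= k lt_kn; rewrite (_ : 1 <= n - k.+1) //; last by lia.
  by elim: k {lt_kn} => //= k ->; rewrite andbT.
- by rewrite /= all_nseq; lia.
Qed.

Lemma filter_gt0_nth_iota s m : all (fun x => 0 < x) s -> size s <= m ->
  [seq x <- map (nth 0 s) (iota 0 m) | 0 < x] = s.
Proof.
move=> s_gt0 le_sm; rewrite -(subnKC le_sm) iotaD map_cat filter_cat add0n.
rewrite -/(mkseq _ _) mkseq_nth (all_filterP s_gt0) -[RHS]cats0; congr (_ ++ _).
apply/eqP; rewrite -[_ == _]negbK -has_filter; apply/hasPn => x /mapP[j].
by rewrite mem_iota => /andP[le_sj _] ->; rewrite nth_default.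
Qed.

Lemma hook_in_partitions n k : k < n -> hook n k \in partitions n.
Proof.
move=> lt_kn; have hook_part := hook_partition lt_kn.
rewrite mem_undup mem_filter hook_part; apply/mapP.
exists [tuple (inord (nth 0 (hook n k) i) : 'I_n.+1) | i < n]; first by rewrite mem_enum.
rewrite /= -map_comp (@eq_map _ _ _ (fun i : 'I_n => nth 0 (hook n k) i)).
  rewrite map_comp val_enum_ord filter_gt0_nth_iota //; first by case/and3P: hook_part.
  by rewrite /= size_nseq.
by move=> i /=; rewrite inordK // nth_hook; case: eqP; case: leqP => //; lia.
Qed.

Lemma card_diag_leq m l :
  #|[set x : 'I_m * 'I_m | in_diag l (x.1 : nat, x.2 : nat)]| <= sumn l.
Proof.
rewrite -sum1_card big_mkcond /=.
rewrite (eq_bigr (fun x : 'I_m * 'I_m => (x.2 < nth 0 l x.1 : nat))); last first.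
  by move=> x _; rewrite inE.
rewrite -(pair_big xpredT xpredT (fun i j : 'I_m => (j < nth 0 l i : nat))) /=.
apply: leq_trans (sum_ord_nth_leq m l); apply: leq_sum => i _.
by rewrite sum_ord_ltn geq_minr.
Qed.

Section StandardTableaux.

Variables (n : nat) (l : seq nat) (T : {ffun 'I_n -> 'I_n * 'I_n}).
Hypotheses (l_part : is_partition n l) (T_SYT : is_SYT l T).

Lemma SYT_inj : injective T.
Proof. by case/and4P: T_SYT => /injectiveP. Qed.

Lemma SYT_in_diag (a : 'I_n) : (T a).2 < nth 0 l (T a).1.
Proof. by case/and4P: T_SYT => _ /forallP/(_ a). Qed.

Lemma SYT_row_lt (a b : 'I_n) : (T a).1 = (T b).1 -> (T a).2 < (T b).2 -> a < b.
Proof.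
case/and4P: T_SYT => _ _ /forallP/(_ a)/forallP/(_ b)/implyP row_inc _ eq_r lt_c.
by apply: row_inc; rewrite eq_r eqxx.
Qed.

Lemma SYT_col_lt (a b : 'I_n) : (T a).2 = (T b).2 -> (T a).1 < (T b).1 -> a < b.
Proof.
case/and4P: T_SYT => _ _ _ /forallP/(_ a)/forallP/(_ b)/implyP col_inc eq_c lt_r.
by apply: col_inc; rewrite eq_c eqxx.
Qed.

Lemma SYT_cell_inj (a b : 'I_n) :
  (T a).1 = (T b).1 :> nat -> (T a).2 = (T b).2 :> nat -> a = b.
Proof.
move=> /val_inj eq_r /val_inj eq_c; apply: SYT_inj.
by rewrite [T a]surjective_pairing eq_r eq_c -surjective_pairing.
Qed.

Lemma SYT_row_le (a b : 'I_n) : (T a).1 = (T b).1 -> (T a).2 <= (T b).2 -> a <= b.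
Proof.
move=> eq_r; rewrite leq_eqVlt => /predU1P[eq_c | lt_c].
  by rewrite (SYT_cell_inj (congr1 val eq_r) eq_c).
exact/ltnW/SYT_row_lt.
Qed.

Lemma SYT_col_le (a b : 'I_n) : (T a).2 = (T b).2 -> (T a).1 <= (T b).1 -> a <= b.
Proof.
move=> eq_c; rewrite leq_eqVlt => /predU1P[eq_r | lt_r].
  by rewrite (SYT_cell_inj eq_r (congr1 val eq_c)).
exact/ltnW/SYT_col_lt.
Qed.

Lemma SYT_surj (x : 'I_n * 'I_n) : in_diag l (x.1 : nat, x.2 : nat) -> exists a, T a = x.
Proof.
set D := [set y : 'I_n * 'I_n | in_diag l (y.1 : nat, y.2 : nat)] => x_diag.
have sub_TD : T @: setT \subset D.
  by apply/subsetP => _ /imsetP[a _ ->]; rewrite inE; apply: SYT_in_diag.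
have card_T : #|T @: setT| = #|D|.
  apply/eqP; rewrite eqn_leq subset_leq_card // card_imset; last exact: SYT_inj.
  rewrite cardsT card_ord; case/and3P: l_part => _ _ /eqP sum_l.
  by rewrite -[X in _ <= X]sum_l card_diag_leq.
have /imsetP[a _ ->] : x \in T @: setT by rewrite ((subset_cardP card_T) sub_TD) inE.
by exists a.
Qed.

Lemma SYT_le (a b : 'I_n) : (T a).1 <= (T b).1 -> (T a).2 <= (T b).2 -> a <= b.
Proof.
move=> le_r le_c; have [e Te] : exists e, T e = ((T a).1, (T b).2).
  apply: SYT_surj; apply: leq_trans (SYT_in_diag b) _.
  exact: partition_nth_leq l_part le_r.
apply: leq_trans (_ : a <= e) (_ : e <= b); first by apply: SYT_row_le; rewrite Te.
by apply: SYT_col_le; rewrite Te.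
Qed.

Lemma SYT_col_lt_of_row_ge (a b : 'I_n) :
  a < b -> (T b).1 <= (T a).1 -> (T a).2 < (T b).2.
Proof.
move=> lt_ab le_r; rewrite ltnNge; apply: contraTN lt_ab => /(SYT_le le_r).
by rewrite leqNgt.
Qed.

End StandardTableaux.

Lemma SYT_ord0 n l (T : {ffun 'I_n.+1 -> 'I_n.+1 * 'I_n.+1}) :
  is_partition n.+1 l -> is_SYT l T -> T ord0 = (ord0, ord0).
Proof.
move=> l_part T_SYT; have [e Te] : exists e, T e = (ord0, ord0).
  apply: (SYT_surj l_part T_SYT); rewrite /in_diag /=.
  by case/and3P: l_part; case: (l) => [|x s] //= _ /andP[].
rewrite -Te; congr (T _); apply/val_inj/eqP; rewrite /= eq_sym -leqn0.
by apply: (SYT_le l_part T_SYT (b := ord0)); rewrite Te.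
Qed.

Lemma leq_gap (f : nat -> nat) a b :
  (forall j, a <= j < b -> f j < f j.+1) ->
  forall i j, a <= i -> i <= j -> j <= b -> f i + (j - i) <= f j.
Proof.
move=> f_inc i j le_ai; elim: j => [|j IHj]; first by rewrite leqn0 => /eqP ->; rewrite addn0.
rewrite leq_eqVlt => /predU1P[-> | lt_ij le_jb]; first by rewrite subnn addn0.
by have := IHj lt_ij (ltnW le_jb); have := f_inc j; lia.
Qed.

Definition iseg {n} k : {set 'I_n} := [set i : 'I_n | i < k].

Lemma ordS_inord n j : j < n -> ordS (inord j : 'I_n.+1) = inord j.+1.
Proof.
by move=> lt_jn; apply: val_inj; rewrite /= !inordK ?modn_small //; lia.
Qed.

Definition hook_tableau (n k : nat) : {ffun 'I_n.+1 -> 'I_n.+1 * 'I_n.+1} :=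
  [ffun a : 'I_n.+1 => if a <= k then (a, ord0) else (ord0, inord (a - k))].

Lemma hook_tableau_row n k (a : 'I_n.+1) :
  ((hook_tableau n k a).1 : nat) = if a <= k then a : nat else 0.
Proof. by rewrite ffunE; case: ifP. Qed.

Lemma hook_tableau_col n k (a : 'I_n.+1) :
  ((hook_tableau n k a).2 : nat) = if a <= k then 0 else a - k.
Proof. by rewrite ffunE; case: ifP => //= _; rewrite inordK //; have := ltn_ord a; lia. Qed.

Lemma hook_tableau_SYT n k : k < n.+1 -> is_SYT (hook n.+1 k) (hook_tableau n k).
Proof.
move=> lt_kn; apply/and4P; split.
- apply/injectiveP => a b eq_ab; apply: val_inj.
  have := congr1 (fun c => val c.1) eq_ab; have := congr1 (fun c => val c.2) eq_ab.
  by rewrite /= !hook_tableau_row !hook_tableau_col; case: (leqP a k); case: (leqP b k); lia.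
- apply/forallP => a; rewrite /in_diag /= hook_tableau_row hook_tableau_col nth_hook.
  by have := ltn_ord a; case: (leqP a k) => ? ?; case: eqP => // ?; lia.
- apply/forallP => a; apply/forallP => b; apply/implyP; rewrite -val_eqE /=.
  by rewrite !hook_tableau_row !hook_tableau_col; case: (leqP a k); case: (leqP b k); lia.
- apply/forallP => a; apply/forallP => b; apply/implyP; rewrite -val_eqE /=.
  by rewrite !hook_tableau_row !hook_tableau_col; case: (leqP a k); case: (leqP b k); lia.
Qed.

Lemma DesT_hook_tableau n k : k < n.+1 -> DesT (hook_tableau n k) = iseg k.
Proof.
move=> lt_kn; apply/setP => i; rewrite !inE; have [lt_in | ] := ltnP i.+1 n.+1; last first.
  by have := ltn_ord i; lia.
rewrite -[i in ordS i]inord_val ordS_inord // !hook_tableau_row inordK //.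
by case: (leqP i k); case: (leqP i.+1 k); lia.
Qed.

Section InitialDescents.

Variables (n k : nat) (l : seq nat) (T : {ffun 'I_n.+1 -> 'I_n.+1 * 'I_n.+1}).
Hypotheses (lt_kn : k < n.+1) (l_part : is_partition n.+1 l) (T_SYT : is_SYT l T)
  (DesT_T : DesT T = iseg k).

Let row j := ((T (inord j)).1 : nat).
Let col j := ((T (inord j)).2 : nat).

Let col_lt_row j : col j < nth 0 l (row j).
Proof. exact: SYT_in_diag. Qed.

Let row_lt_size j : row j < size l.
Proof.
have := col_lt_row j; case: (ltnP (row j) (size l)) => //.
by move/(nth_default 0) ->.
Qed.

Let T_inord0 : T (inord 0) = (ord0, ord0).
Proof. by rewrite -(SYT_ord0 l_part T_SYT); congr (T _); apply: val_inj; rewrite /= inordK. Qed.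

Let row0 : row 0 = 0.
Proof. by rewrite /row T_inord0. Qed.

Let col0 : col 0 = 0.
Proof. by rewrite /col T_inord0. Qed.

Let descent j : j < n -> (j < k) = (row j < row j.+1).
Proof.
move=> lt_jn; have /setP/(_ (inord j)) := DesT_T.
rewrite !inE ordS_inord // inordK; last lia.
by rewrite (_ : j.+1 < n.+1) // => <-.
Qed.

Let row_gap i j : i <= j -> j <= k -> row i + (j - i) <= row j.
Proof.
by apply: leq_gap (leq0n i) => m /andP[_ lt_mk]; rewrite -descent //; lia.
Qed.

Let col_gap i j : k <= i -> i <= j -> j <= n -> col i + (j - i) <= col j.
Proof.
apply: leq_gap => m /andP[le_km lt_mn].
have le_row : row m.+1 <= row m by rewrite leqNgt -descent //; lia.
by apply: (SYT_col_lt_of_row_ge l_part T_SYT) le_row; rewrite !inordK; lia.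
Qed.

Lemma SYT_DesT_iseg_shape : l = hook n.+1 k.
Proof.
apply: partition_eq_hook l_part _ _.
  by have := row_gap (leq0n k) (leqnn k); have := row_lt_size k; rewrite row0; lia.
have := col_gap (leqnn k) lt_kn (leqnn n); have := col_lt_row n.
by have := partition_nth_leq l_part (leq0n (row n)); lia.
Qed.

Lemma SYT_DesT_iseg_eq : T = hook_tableau n k.
Proof.
have nth_l r : nth 0 l r = if r == 0 then n.+1 - k else (r <= k : nat).
  by rewrite SYT_DesT_iseg_shape nth_hook.
have size_l : size l = k.+1 by rewrite SYT_DesT_iseg_shape /= size_nseq.
have row_le j : j <= k -> row j = j.
  move=> le_jk; have := row_gap (leq0n j) le_jk; have := row_gap le_jk (leqnn k).
  by have := row_lt_size k; rewrite row0 size_l; lia.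
have col_ge j : k <= j -> j <= n -> col j = j - k.
  move=> le_kj le_jn; have := col_gap (leqnn k) le_kj le_jn.
  have := col_gap le_kj le_jn (leqnn n).
  by have := col_lt_row n; rewrite nth_l; case: eqP => _; [|case: (leqP (row n) k)]; lia.
have col_le j : j <= k -> col j = 0.
  case: (posnP j) => [-> _ | j_gt0 le_jk]; first exact: col0.
  by have := col_lt_row j; rewrite nth_l row_le //; case: eqP; lia.
have row_gt j : k < j -> j <= n -> row j = 0.
  move=> lt_kj le_jn; have := col_lt_row j; rewrite col_ge //; try lia.
  by rewrite nth_l; case: eqP => // _; case: (leqP (row j) k); lia.
apply/ffunP => a; have -> : T a = T (inord a) by rewrite inord_val.
have le_an : a <= n by rewrite -ltnS.
apply/eqP; rewrite [T _]surjective_pairing [hook_tableau n k a]surjective_pairing.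
rewrite xpair_eqE -!val_eqE /= hook_tableau_row hook_tableau_col -/(row a) -/(col a).
by case: leqP => ?; [rewrite row_le ?col_le | rewrite row_gt ?col_ge //]; lia.
Qed.

End InitialDescents.

Lemma sum_SYT_DesT_iseg n k l : k < n.+1 -> is_partition n.+1 l ->
  \sum_(T : {ffun 'I_n.+1 -> 'I_n.+1 * 'I_n.+1} | is_SYT l T) (DesT T == iseg k : nat)
    = (l == hook n.+1 k).
Proof.
move=> lt_kn l_part; have [-> | l_neq] := eqVneq l (hook n.+1 k); last first.
  apply: big1 => T T_SYT; case: eqP => // /(SYT_DesT_iseg_shape lt_kn l_part T_SYT).
  by move/eqP: l_neq.
rewrite (bigD1 (hook_tableau n k)) ?hook_tableau_SYT //= DesT_hook_tableau // eqxx.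
rewrite big1 // => T /andP[T_SYT T_neq]; case: eqP => // DesT_T.
by move: T_neq; rewrite (SYT_DesT_iseg_eq lt_kn _ T_SYT DesT_T) ?eqxx // hook_partition.
Qed.

Lemma iseg0 n : iseg 0 = set0 :> {set 'I_n}.
Proof. by apply/setP => i; rewrite !inE. Qed.

Lemma isegT n : iseg n = [set: 'I_n].
Proof. by apply/setP => i; rewrite !inE ltn_ord. Qed.

Lemma shift1_iseg n k :
  k < n.+1 -> shift1 (ord_max |: iseg k) = iseg k.+1 :> {set 'I_n.+1}.
Proof.
move=> lt_kn; apply/setP => x; rewrite inE; apply/imsetP/idP.
  case=> y; rewrite !inE => /predU1P[-> | lt_yk] ->; first by rewrite /= modnn.
  by rewrite /= modn_small; lia.
case: (posnP x) => [x0 _ | x_gt0 lt_xk].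
  by exists ord_max; rewrite ?setU11 //; apply: val_inj; rewrite /= modnn x0.
exists (inord x.-1); first by rewrite !inE inordK; lia.
by apply: val_inj; rewrite /= inordK ?modn_small; have := ltn_ord x; lia.
Qed.

Lemma Des_cDes n (p : 'S_n.+1) : Des p = cDes p :\ ord_max.
Proof.
apply/setP => i; rewrite !inE; congr andb.
by have := ltn_ord i; rewrite -val_eqE /=; lia.
Qed.

Lemma ordS_neq n (i : 'I_n.+2) : ordS i != i.
Proof.
rewrite -val_eqE /=; case: (ltnP i.+1 n.+2) => [lt_in | le_ni].
  by rewrite modn_small // neq_ltn ltnSn orbT.
have i_max : i.+1 = n.+2 by have := ltn_ord i; lia.
by rewrite i_max modnn; lia.
Qed.

Lemma cDes_neq0 n (p : 'S_n.+2) : cDes p != set0.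
Proof.
apply/set0Pn; set i := (p^-1 ord_max)%g; exists i.
have p_i : p i = ord_max by rewrite permKV.
have : p (ordS i) != p i by rewrite (inj_eq perm_inj) ordS_neq.
by rewrite inE p_i -val_eqE /=; have := ltn_ord (p (ordS i)); lia.
Qed.

Lemma cDes_neqT n (p : 'S_n.+1) : cDes p != setT.
Proof. by apply/eqP => /setP/(_ (p^-1 ord0)%g); rewrite !inE permKV. Qed.

Definition cDes_count n (A : {set 'S_n}) (J : {set 'I_n}) : nat :=
  \sum_(p in A) (cDes p == J).

Lemma cDes_count0 n (A : {set 'S_n.+2}) : cDes_count A set0 = 0.
Proof. by apply: big1 => p _; rewrite (negbTE (cDes_neq0 p)). Qed.

Lemma cDes_countT n (A : {set 'S_n.+1}) : cDes_count A setT = 0.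
Proof. by apply: big1 => p _; rewrite (negbTE (cDes_neqT p)). Qed.

Lemma cDes_count_shift1 n (A : {set 'S_n}) J :
  cDes_invariant A -> cDes_count A (shift1 J) = cDes_count A J.
Proof.
case=> psi [psi_A psi_cDes]; rewrite /cDes_count -{1}psi_A big_imset /=; last first.
  by move=> p q _ _ /perm_inj.
apply: eq_bigr => p p_A; rewrite psi_cDes //.
by rewrite (inj_eq (imset_inj (@ordS_inj n))).
Qed.

Lemma eq_setD1E (T : finType) (C K : {set T}) x : x \notin K ->
  (C :\ x == K : nat) = (C == K) + (C == x |: K).
Proof.
move=> xNK; have [xC | xNC] := boolP (x \in C).
  have -> : (C == K) = false by apply: contraNF xNK => /eqP <-.
  by congr nat_of_bool; apply/eqP/eqP => [<- | ->]; rewrite ?setD1K ?setU1K.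
have -> : (C == x |: K) = false by apply: contraNF xNC => /eqP ->; rewrite setU11.
by rewrite addn0 (setDidPl _) // disjoint_sym disjoints1.
Qed.

Lemma Des_count_iseg n (A : {set 'S_n.+1}) k : cDes_invariant A -> k < n.+1 ->
  \sum_(p in A) (Des p == iseg k : nat)
    = cDes_count A (iseg k) + cDes_count A (iseg k.+1).
Proof.
move=> A_inv lt_kn; rewrite -(shift1_iseg lt_kn) (cDes_count_shift1 _ A_inv).
rewrite /cDes_count -big_split /=; apply: eq_bigr => p _.
by rewrite Des_cDes eq_setD1E // inE -leqNgt.
Qed.

Local Open Scope ring_scope.

Definition mnm_of_set n (J : {set 'I_n}) : 'X_{1..n} := (\sum_(i in J) U_(i))%MM.

Lemma mnm_of_setE n (J : {set 'I_n}) i : mnm_of_set J i = (i \in J).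
Proof.
rewrite mnm_sumE big_mkcond (bigD1 i) //= mnm1E eqxx big1 ?addn0.
  by case: (i \in J).
by move=> j /negbTE j_neq; rewrite mnm1E j_neq if_same.
Qed.

Lemma mnm_of_set_inj n : injective (@mnm_of_set n).
Proof.
move=> J K /mnmP eq_JK; apply/setP => i.
by have := eq_JK i; rewrite !mnm_of_setE; do 2 case: (_ \in _).
Qed.

Lemma mcoeff_xmon n (J K : {set 'I_n}) : (xmon J)@_(mnm_of_set K) = (J == K)%:R.
Proof. by rewrite /xmon mprodXE mcoeffX (inj_eq (@mnm_of_set_inj n)). Qed.

Lemma mcoeff_sum_xmon n (I : finType) (P : pred I) (D : I -> {set 'I_n}) K :
  (\sum_(i | P i) xmon (D i))@_(mnm_of_set K)
    = (\sum_(i | P i) (D i == K : nat))%N%:R.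
Proof.
by rewrite raddf_sum natr_sum; apply: eq_bigr => i _; rewrite /= mcoeff_xmon.
Qed.

Lemma mult_hook_cDes_count n (A : {set 'S_n.+1}) (m : seq nat -> nat) k :
  cDes_invariant A ->
  \sum_(p in A) xmon (Des p) =
    \sum_(l <- partitions n.+1) (m l)%:R *
       \sum_(T : {ffun 'I_n.+1 -> 'I_n.+1 * 'I_n.+1} | is_SYT l T) xmon (DesT T) ->
  (k < n.+1)%N -> m (hook n.+1 k) = (cDes_count A (iseg k) + cDes_count A (iseg k.+1))%N.
Proof.
move=> A_inv A_exp lt_kn; rewrite -Des_count_iseg //.
have := congr1 (mcoeff (mnm_of_set (iseg k))) A_exp.
rewrite mcoeff_sum_xmon [X in _ = X -> _]raddf_sum /=.
have coeff_l l : l \in partitions n.+1 ->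
    ((m l)%:R * \sum_(T : {ffun 'I_n.+1 -> 'I_n.+1 * 'I_n.+1} | is_SYT l T) xmon (DesT T))
      @_(mnm_of_set (iseg k)) = (l == hook n.+1 k)%:R *+ m l.
  rewrite mem_undup mem_filter => /andP[l_part _].
  by rewrite mulr_natl mcoeffMn mcoeff_sum_xmon sum_SYT_DesT_iseg.
rewrite (bigD1_seq (hook n.+1 k)) ?hook_in_partitions ?undup_uniq //=.
rewrite [X in _ + X]big1_seq; last first.
  by move=> l /andP[l_neq l_part]; rewrite coeff_l // (negbTE l_neq) mul0rn.
rewrite coeff_l ?hook_in_partitions // eqxx mulr1n addr0.
by move/eqP; rewrite eqr_nat eq_sym => /eqP.
Qed.

Lemma sum_alt_consecutive (R : pzRingType) (b : nat -> R) k n : (k <= n)%N ->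
  \sum_(k <= i < n) (-1) ^+ (i - k) * (b i + b i.+1) = b k - (-1) ^+ (n - k) * b n.
Proof.
move=> le_kn; rewrite (telescope_sumr_eq (fun i => - ((-1) ^+ (i - k) * b i))) //.
  by rewrite subnn expr0 mul1r opprK addrC.
move=> i /andP[le_ki _]; rewrite subSn // exprS mulN1r !mulNr !opprK.
by rewrite mulrDr addrC.
Qed.

Theorem lemma3p8 (n : nat) (A : {set 'S_n}) (m : seq nat -> nat) :
  (2 <= n)%N ->
  schur_positive A ->
  cDes_invariant A ->
  \sum_(p in A) xmon (Des p) =
    \sum_(l <- partitions n) (m l)%:R *
       \sum_(T : {ffun 'I_n -> 'I_n * 'I_n} | is_SYT l T) xmon (DesT T) ->
  (forall k : nat, (k < n)%N ->
     0 <= \sum_(k <= i < n) (-1) ^+ (i - k) * ((m (hook n i))%:R : int)) /\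
  \sum_(0 <= i < n) (-1) ^+ i * ((m (hook n i))%:R : int) = 0.
Proof.
case: n A m => [|[|n]] // A m _ _ A_inv A_exp.
pose b k : int := (cDes_count A (iseg k))%:R.
have alt_sum k : (k <= n.+2)%N ->
    \sum_(k <= i < n.+2) (-1) ^+ (i - k) * (m (hook n.+2 i))%:R = b k.
  move=> le_kn; under eq_big_nat => i /andP[_ lt_in].
    by rewrite (mult_hook_cDes_count A_inv A_exp lt_in) natrD; over.
  by rewrite sum_alt_consecutive // /b isegT cDes_countT mulr0 subr0.
split=> [k /ltnW/alt_sum -> | ]; first exact: ler0n.
have b0 : b 0%N = 0 by rewrite /b iseg0 cDes_count0.
rewrite -[RHS]b0 -(alt_sum 0%N) //.
by apply: eq_big_nat => i _; rewrite subn0.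
Qed.
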